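(* Let $W_2\in\{M_2,S_2\}$ and let $\phi:W_2\to W_2$ be a linear map with $\sigma_{\mathcal{K}}(\phi(A))=\sigma_{\mathcal{K}}(A)$ for all $A\in W_2$. If $A\in W_2$ has two distinct strict boundary L-eigenvalues, then $$\sigma_{\mathcal{K}}^{int}(A)=\sigma_{\mathcal{K}}^{int}(\phi(A))\neq\emptyset\quad\text{and}\quad \sigma_{\mathcal{K}}^{bd}(A)=\sigma_{\mathcal{K}}^{bd}(\phi(A)).$$
   Context: $M_2$: real $2\times2$ matrices; $S_2$: symmetric ones. Lorentz cone $\mathcal{K}=\{(x_1,x_2)^T:|x_1|\le x_2\}$. A real $\lambda$ is an L-eigenvalue of $A$ if there is a nonzero $x\in\mathcal{K}$ with $(A-\lambda I)x\in\mathcal{K}$ and $x^T(A-\lambda I)x=0$; $\sigma_{\mathcal{K}}(A)$ is the set of L-eigenvalues; $\sigma^{int}_{\mathcal{K}}(A)$ (resp. $\sigma^{bd}_{\mathcal{K}}(A)$) consists of those with such an $x$ in the interior (resp. on the boundary) of $\mathcal{K}$. For $A=\begin{bmatrix}a&b\\c&d\end{bmatrix}$, a boundary L-eigenvalue $\lambda$ is of type $+$ if $\lambda=\frac{a+d+b+c}{2}$ and $a-d\le c-b$, of type $-$ if $\lambda=\frac{a+d-b-c}{2}$ and $a-d\le b-c$; it is strict if it is of type $+$ with $a-d<c-b$ or of type $-$ with $a-d<b-c$ (if of both types, strict when at least one of these strict inequalities holds). *)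

From mathcomp Require Import all_boot all_order all_algebra.
From mathcomp Require Import reals.
Set Implicit Arguments. Unset Strict Implicit. Unset Printing Implicit Defensive.
Import Order.TTheory GRing.Theory Num.Theory.
Local Open Scope ring_scope.

Section LorentzDefs.
Variable R : realType.

Definition i0 : 'I_2 := @ord0 1.
Definition i1 : 'I_2 := @ord_max 1.

Definition inK (x : 'cV[R]_2) : Prop := `|x i0 0| <= x i1 0.
Definition intK (x : 'cV[R]_2) : Prop := `|x i0 0| < x i1 0.
Definition bdK (x : 'cV[R]_2) : Prop := `|x i0 0| = x i1 0.

Definition Lpair (A : 'M[R]_2) (lam : R) (x : 'cV[R]_2) : Prop :=
  [/\ x != 0, inK x, inK ((A - lam%:M) *m x)
    & (x^T *m (A - lam%:M) *m x) 0 0 = 0].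

Definition Lspec (A : 'M[R]_2) (lam : R) : Prop := exists x, Lpair A lam x.
Definition Lspec_int (A : 'M[R]_2) (lam : R) : Prop :=
  exists x, Lpair A lam x /\ intK x.
Definition Lspec_bd (A : 'M[R]_2) (lam : R) : Prop :=
  exists x, Lpair A lam x /\ bdK x.

Definition strict_bd (A : 'M[R]_2) (lam : R) : Prop :=
  let a := A i0 i0 in let b := A i0 i1 in
  let c := A i1 i0 in let d := A i1 i1 in
  Lspec_bd A lam /\
  ((lam = (a + d + b + c) / 2 /\ a - d < c - b) \/
   (lam = (a + d - b - c) / 2 /\ a - d < b - c)).

(* W_2 : all of M_2 (sym = false) or S_2 (sym = true) *)
Definition inW (sym : bool) (A : 'M[R]_2) : Prop := if sym then A^T = A else True.

End LorentzDefs.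

(* In the coordinates u = x2 + x1, v = x2 - x1 (see [uv]) the cone K is the
   nonnegative quadrant and M acts as [[lplus M, kminus M], [kplus M, lminus M]],
   so L-eigenvalues are Pareto eigenvalues: the boundary ones are lplus (when
   kplus >= 0) and lminus (when kminus >= 0), the interior ones are eigenvalues
   of M with a positive eigenvector.  Two distinct strict boundary L-eigenvalues
   mean kplus, kminus > 0 and lplus <> lminus; the spectrum is then
   {lplus, lminus, perron} with the Perron root above both.  A matrix with this
   three-point spectrum either splits it the same way, and then has the same
   trace and determinant, or has lplus, lminus interior and the Perron root on
   the boundary, and then its determinant is lplus * lminus <> det A.
   To rule out the second case for phi A, run the dichotomy along the pencil
   A + t Eplus, which only moves lplus: for all t but one, one of two quadratic
   identities in t holds, hence one holds identically.  The wrong one would make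
   the diagonal of phi A + t phi Eplus, which is affine in t, equal to the
   eigenvalues of A + t Eplus, which are not. *)

From mathcomp Require Import all_boot all_order all_algebra.
From mathcomp Require Import reals ring lra.
Set Implicit Arguments. Unset Strict Implicit. Unset Printing Implicit Defensive.
Import Order.TTheory GRing.Theory Num.Theory.
Local Open Scope ring_scope.

Lemma poly_eq_except (F : numDomainType) (p q : {poly F}) (t0 : F) :
  (forall t, t != t0 -> p.[t] = q.[t]) -> p = q.
Proof.
move=> epq; apply/eqP; rewrite -subr_eq0; apply/eqP.
pose rs := [seq t0 + k.+1%:R | k <- iota 0 (size (p - q))].
apply: (@roots_geq_poly_eq0 _ _ rs); last by rewrite size_map size_iota.
- apply/allP => _ /mapP[k _ ->]; rewrite /root hornerD hornerN epq ?subrr //.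
  by rewrite -subr_eq0 addrC addKr pnatr_eq0.
- by rewrite map_inj_uniq ?iota_uniq // => m n /addrI /eqP; rewrite eqr_nat => /eqP [].
Qed.

Lemma poly_eq_or_except (F : numDomainType) (p q r s : {poly F}) (t0 : F) :
  (forall t, t != t0 -> p.[t] = q.[t] \/ r.[t] = s.[t]) -> p = q \/ r = s.
Proof.
move=> epqrs; have : (p - q) * (r - s) = 0.
  apply: (@poly_eq_except _ _ _ t0) => t /epqrs [] e;
  by rewrite horner0 hornerM !hornerD !hornerN e subrr ?mul0r ?mulr0.
by move/eqP; rewrite mulf_eq0 !subr_eq0 => /orP[] /eqP; [left | right].
Qed.

Lemma affine_mul_const (F : fieldType) (a b c d k : F) : k != 0 ->
  (forall t, (a + b * t) * (c + d * t) = k) -> b = 0 /\ d = 0.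
Proof.
move=> k0 ek; have root_affine (e f : F) : f != 0 -> e + f * (- e / f) = 0.
  by move=> f0; rewrite mulrCA mulfV // mulr1 subrr.
split; apply/eqP; apply: contraNT k0 => f0.
- by rewrite -(ek (- a / b)) root_affine // mul0r.
- by rewrite -(ek (- c / d)) root_affine // mulr0.
Qed.

Lemma quad_roots (F : idomainType) (s p a b : F) : a != b ->
  a ^+ 2 - s * a + p = 0 -> b ^+ 2 - s * b + p = 0 -> a + b = s /\ a * b = p.
Proof.
move=> ab ea eb.
have sab : a + b = s.
  apply/eqP; rewrite -subr_eq0; apply/eqP/(mulfI (_ : a - b != 0)); first by rewrite subr_eq0.
  by rewrite mulr0 -[RHS](subrr 0) -{1}ea -eb; ring.
split => //; apply/eqP; rewrite -subr_eq0 -oppr_eq0 opprB; apply/eqP.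
by rewrite -ea -sab; ring.
Qed.

Section LorentzCoordinates.
Variable R : realType.
Implicit Types (M N A B Y : 'M[R]_2) (l t u v x y z : R).

Definition lplus M := (M i0 i0 + M i1 i1 + M i0 i1 + M i1 i0) / 2.
Definition lminus M := (M i0 i0 + M i1 i1 - M i0 i1 - M i1 i0) / 2.
Definition kplus M := (M i1 i0 + M i1 i1 - M i0 i0 - M i0 i1) / 2.
Definition kminus M := (M i0 i1 - M i1 i0 + M i1 i1 - M i0 i0) / 2.

Definition uv u v : 'cV[R]_2 := \col_i (if i == i0 then (u - v) / 2 else (u + v) / 2).

Lemma ord2_cases (i : 'I_2) : i = i0 \/ i = i1.
Proof. by case: i => -[|[|//]] ?; [left|right]; exact: val_inj. Qed.

Lemma lift_i0 : lift ord0 ord0 = i1. Proof. exact: val_inj. Qed.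

Lemma mxtrace_coords M : \tr M = lplus M + lminus M.
Proof.
rewrite /mxtrace !big_ord_recl big_ord0 lift_i0 /lplus /lminus.
rewrite -[ord0]/i0; by field.
Qed.

Lemma det_coords M : \det M = lplus M * lminus M - kplus M * kminus M.
Proof.
rewrite (expand_det_row _ ord0) !big_ord_recl big_ord0 /cofactor !det_mx11 !mxE /=.
rewrite !lift_i0 /lplus /lminus /kplus /kminus -[ord0]/i0.
have -> : lift i1 0 = i0 by exact: val_inj.
rewrite /= expr0 expr1; by field.
Qed.

Lemma pencil_coords t Y B :
  [/\ lplus (t *: Y + B) = t * lplus Y + lplus B, lminus (t *: Y + B) = t * lminus Y + lminus B,
      kplus (t *: Y + B) = t * kplus Y + kplus B & kminus (t *: Y + B) = t * kminus Y + kminus B].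
Proof. by rewrite /lplus /lminus /kplus /kminus !mxE; split; field. Qed.

Lemma shift_coords M l :
  [/\ lplus (M - l%:M) = lplus M - l, lminus (M - l%:M) = lminus M - l,
      kplus (M - l%:M) = kplus M & kminus (M - l%:M) = kminus M].
Proof. by rewrite /lplus /lminus /kplus /kminus !mxE /= !mulr1n !mulr0n; split; field. Qed.

Lemma uv_coords (w : 'cV[R]_2) : w = uv (w i1 0 + w i0 0) (w i1 0 - w i0 0).
Proof.
apply/matrixP => i j; rewrite !mxE (ord1 j).
by case: (ord2_cases i) => ->; rewrite /=; field.
Qed.

Lemma mulmx_uv M u v :
  M *m uv u v = uv (lplus M * u + kminus M * v) (kplus M * u + lminus M * v).
Proof.
apply/matrixP => i j; rewrite !mxE big_ord_recl big_ord1 lift_i0 !mxE -[ord0]/i0 /=.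
by rewrite /lplus /lminus /kplus /kminus; case: (ord2_cases i) => ->; field.
Qed.

Lemma form_uv u v u' v' : ((uv u v)^T *m uv u' v') 0 0 = (u * u' + v * v') / 2.
Proof. by rewrite !mxE big_ord_recl big_ord1 lift_i0 !mxE -[ord0]/i0 /=; field. Qed.

Lemma uv_eq0 u v : (uv u v == 0) = (u == 0) && (v == 0).
Proof.
apply/eqP/andP => [e | [/eqP-> /eqP->]].
  have := congr1 (fun w : 'cV[R]_2 => w i0 0) e; have := congr1 (fun w : 'cV[R]_2 => w i1 0) e.
  by rewrite !mxE /= => e1 e0; split; apply/eqP; lra.
by apply/matrixP => i j; rewrite !mxE subr0 addr0 mul0r if_same.
Qed.

Lemma inK_uv u v : inK (uv u v) <-> 0 <= u /\ 0 <= v.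
Proof.
rewrite /inK !mxE /= ler_norml.
by split => [/andP[] | []] *; [split | apply/andP; split]; lra.
Qed.

Lemma intK_uv u v : intK (uv u v) <-> 0 < u /\ 0 < v.
Proof.
rewrite /intK !mxE /= ltr_norml.
by split => [/andP[] | []] *; [split | apply/andP; split]; lra.
Qed.

Lemma bdK_uv u v : 0 <= u -> 0 <= v -> bdK (uv u v) <-> u = 0 \/ v = 0.
Proof.
move=> u0 v0; rewrite /bdK !mxE /=; split.
  by have [|] := lerP 0 ((u - v) / 2) => ?; [rewrite ger0_norm | rewrite ltr0_norm] => //; lra.
by case=> ->; rewrite ?sub0r ?add0r ?subr0 ?addr0 ?mulNr ?normrN ger0_norm // divr_ge0.
Qed.

Lemma Lpair_uv M l u v :
  Lpair M l (uv u v) <->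
  [/\ (u != 0) || (v != 0), 0 <= u /\ 0 <= v,
      0 <= (lplus M - l) * u + kminus M * v /\ 0 <= kplus M * u + (lminus M - l) * v
    & u * ((lplus M - l) * u + kminus M * v) + v * (kplus M * u + (lminus M - l) * v) = 0].
Proof.
rewrite /Lpair -mulmxA mulmx_uv form_uv uv_eq0 negb_and.
have [-> -> -> ->] := shift_coords M l.
split=> -[nz /inK_uv uv0 /inK_uv UV0 e]; split => //; try exact/inK_uv.
  by move/eqP: e; rewrite mulf_eq0 invr_eq0 pnatr_eq0 orbF => /eqP.
by rewrite e mul0r.
Qed.

Lemma Lspec_intP M l :
  Lspec_int M l <->
  exists u v, [/\ 0 < u, 0 < v, (l - lplus M) * u = kminus M * v
                & (l - lminus M) * v = kplus M * u].
Proof.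
split=> [[w []] | [u [v [u0 v0 eu ev]]]].
  rewrite [w]uv_coords; set u := _ + _; set v := _ - _.
  move=> /Lpair_uv [_ _ [U0 V0] e] /intK_uv [u0 v0].
  have := paddr_eq0 (mulr_ge0 (ltW u0) U0) (mulr_ge0 (ltW v0) V0).
  rewrite e eqxx !mulf_eq0 (gt_eqF u0) (gt_eqF v0) /= => /esym/andP[/eqP U /eqP V].
  by exists u, v; split => //; lra.
exists (uv u v); split; last exact/intK_uv.
apply/Lpair_uv; have -> : (lplus M - l) * u + kminus M * v = 0 by lra.
have -> : kplus M * u + (lminus M - l) * v = 0 by lra.
by rewrite !mulr0 addr0 gt_eqF //; split => //; split; apply: ltW.
Qed.

Lemma Lspec_bdP M l :
  Lspec_bd M l <->
  (l = lplus M /\ 0 <= kplus M) \/ (l = lminus M /\ 0 <= kminus M).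
Proof.
split=> [[w []] | [[-> kp] | [-> km]]].
- rewrite [w]uv_coords; set u := _ + _; set v := _ - _.
  move=> /Lpair_uv [nz [u0 v0] [U0 V0] e] /(bdK_uv u0 v0) [z | z];
    rewrite z ?eqxx /= in nz U0 V0 e.
  + have vp : 0 < v by rewrite lt_def nz v0.
    rewrite !mul0r !mulr0 !add0r pmulr_lge0 // in e U0.
    move/eqP: e; rewrite mulrCA !mulf_eq0 (gt_eqF vp) /= orbF subr_eq0.
    by move=> /eqP <-; right.
  + have up : 0 < u by rewrite lt_def orbF in nz *; rewrite nz u0.
    rewrite !mul0r !mulr0 !addr0 pmulr_lge0 // in e V0.
    move/eqP: e; rewrite mulrCA !mulf_eq0 (gt_eqF up) /= orbF subr_eq0.
    by move=> /eqP <-; left.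
- exists (uv 1 0); split; last by apply/bdK_uv; [exact: ler01 | exact: lexx | right].
  by apply/Lpair_uv; rewrite oner_eq0 /=; split; try split; lra.
- exists (uv 0 1); split; last by apply/bdK_uv; [exact: lexx | exact: ler01 | left].
  by apply/Lpair_uv; rewrite oner_eq0 orbT; split; try split; lra.
Qed.

Lemma Lspec_bd_or_int M l : Lspec M l <-> Lspec_bd M l \/ Lspec_int M l.
Proof.
split=> [[w pw] | [[w [pw _]] | [w [pw _]]]]; try by exists w.
have [_ wK _ _] := pw.
by move: wK; rewrite /inK le_eqVlt => /orP[/eqP ? | ?]; [left | right]; exists w.
Qed.

Lemma Lspec_int_root M l : Lspec_int M l -> l ^+ 2 - \tr M * l + \det M = 0.
Proof.
case/Lspec_intP => u [v [u0 v0 eu ev]].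
have : ((l - lplus M) * (l - lminus M) - kplus M * kminus M) * (u * v) = 0.
  transitivity ((l - lplus M) * u * ((l - lminus M) * v) - kminus M * v * (kplus M * u)).
    by ring.
  by rewrite eu ev; ring.
move/eqP; rewrite mulf_eq0 (gt_eqF (mulr_gt0 u0 v0)) orbF => /eqP <-.
by rewrite mxtrace_coords det_coords; ring.
Qed.

Lemma Lspec_int_ge M l : Lspec_int M l ->
  (0 <= kminus M -> lplus M <= l) /\ (0 <= kplus M -> lminus M <= l).
Proof.
case/Lspec_intP => u [v [u0 v0 eu ev]]; split => k0.
  by rewrite -subr_ge0 -(pmulr_lge0 _ u0) eu mulr_ge0 // ltW.
by rewrite -subr_ge0 -(pmulr_lge0 _ v0) ev mulr_ge0 // ltW.
Qed.

Definition two_strict_bd M := [/\ 0 < kplus M, 0 < kminus M & lplus M != lminus M].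

Lemma two_strict_bd_of_pair A l1 l2 :
  l1 != l2 -> strict_bd A l1 -> strict_bd A l2 -> two_strict_bd A.
Proof.
rewrite /strict_bd /two_strict_bd /lplus /lminus /kplus /kminus => /eqP l12.
case=> _ [[e1 c1] | [e1 c1]] [_ [[e2 c2] | [e2 c2]]]; try lra.
all: by split; try lra; apply/eqP => e; lra.
Qed.

Definition perron_root M :=
  (lplus M + lminus M) / 2 + Num.sqrt (((lplus M - lminus M) / 2) ^+ 2 + kplus M * kminus M).

Lemma two_strict_bd_spec M : two_strict_bd M ->
  [/\ lplus M < perron_root M, lminus M < perron_root M,
      forall l, Lspec_int M l <-> l = perron_root M
    & forall l, Lspec_bd M l <-> l = lplus M \/ l = lminus M].
Proof.
case=> kp km lpm; rewrite /perron_root.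
set d := (lplus M - lminus M) / 2; set s := Num.sqrt _.
have kk : 0 < kplus M * kminus M by exact: mulr_gt0.
have s0 : 0 <= s by exact: sqrtr_ge0.
have ss : s ^+ 2 = d ^+ 2 + kplus M * kminus M.
  by rewrite sqr_sqrtr // addr_ge0 ?sqr_ge0 ?ltW.
have [ds nds] : d < s /\ - d < s by split; nra.
have lp_mu : lplus M < (lplus M + lminus M) / 2 + s by rewrite /d in ds *; lra.
have lm_mu : lminus M < (lplus M + lminus M) / 2 + s by rewrite /d in nds *; lra.
have int_mu : Lspec_int M ((lplus M + lminus M) / 2 + s).
  apply/Lspec_intP; exists (kminus M), ((lplus M + lminus M) / 2 + s - lplus M).
  split; [done | lra | ring | rewrite /d in ss; nra].
split=> // l; split.
- move=> il; apply/eqP; apply: contraT => lmu.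
  have [sum _] := quad_roots lmu (Lspec_int_root il) (Lspec_int_root int_mu).
  have [+ _] := Lspec_int_ge il; move/(_ (ltW km)).
  by rewrite mxtrace_coords in sum; rewrite /d in nds; lra.
- by move=> ->.
- by case/Lspec_bdP => [[-> _] | [-> _]]; [left | right].
- by case=> ->; apply/Lspec_bdP; [left | right]; split => //; apply: ltW.
Qed.

Lemma Lspec_below_int_pair N x y z : Lspec_int N x -> Lspec_int N z -> x < z ->
  Lspec N y -> y < z -> y = x.
Proof.
move=> ix iz xz /Lspec_bd_or_int sy yz.
have [sxz _] := quad_roots (negbT (lt_eqF xz)) (Lspec_int_root ix) (Lspec_int_root iz).
rewrite mxtrace_coords in sxz; have [gep gem] := Lspec_int_ge ix.
case: sy => [/Lspec_bdP [[ey k] | [ey k]] | iy].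
- by have := gem k; lra.
- by have := gep k; lra.
have [syz _] := quad_roots (negbT (lt_eqF yz)) (Lspec_int_root iy) (Lspec_int_root iz).
by rewrite mxtrace_coords in syz; lra.
Qed.

Lemma Lspec_below_bd_pair N x y z : Lspec_bd N x -> Lspec_bd N z -> x < z ->
  Lspec N y -> y < z -> y = x.
Proof.
move=> /Lspec_bdP bx /Lspec_bdP bz xz /Lspec_bd_or_int [/Lspec_bdP by_ | iy] yz.
  by case: bx bz by_ => [[ex _] | [ex _]] [[ez _] | [ez _]] [[ey _] | [ey _]]; lra.
have [gep gem] := Lspec_int_ge iy.
by case: bx bz => [[ex k] | [ex k]] [[ez k'] | [ez k']]; lra.
Qed.

Lemma Lspec_bd_pair_tr N x y : x != y -> Lspec_bd N x -> Lspec_bd N y -> x + y = \tr N.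
Proof.
rewrite mxtrace_coords => /eqP xy /Lspec_bdP bx /Lspec_bdP by_.
by case: bx by_ => [[ex _] | [ex _]] [[ey _] | [ey _]]; lra.
Qed.

Lemma Lspec3_cases N x y z : x != y -> x < z -> y < z ->
  (forall l, Lspec N l <-> [\/ l = x, l = y | l = z]) ->
  (forall l, Lspec_int N l <-> l = z) /\ (forall l, Lspec_bd N l <-> l = x \/ l = y)
  \/ [/\ Lspec_int N x, Lspec_int N y & Lspec_bd N z].
Proof.
move=> /eqP xy xz yz spec.
have sx : Lspec N x by apply/spec; constructor 1.
have sy : Lspec N y by apply/spec; constructor 2.
have sz : Lspec N z by apply/spec; constructor 3.
have [bz | iz] := (Lspec_bd_or_int N z).1 sz.
  right; split => //.
  - have [bx | //] := (Lspec_bd_or_int N x).1 sx.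
    by case: xy; rewrite (Lspec_below_bd_pair bx bz xz sy yz).
  - have [by_ | //] := (Lspec_bd_or_int N y).1 sy.
    by case: xy; rewrite (Lspec_below_bd_pair by_ bz yz sx xz).
have nix : ~ Lspec_int N x.
  by move=> ix; case: xy; rewrite (Lspec_below_int_pair ix iz xz sy yz).
have niy : ~ Lspec_int N y.
  by move=> iy; case: xy; rewrite (Lspec_below_int_pair iy iz yz sx xz).
have [bx | //] := (Lspec_bd_or_int N x).1 sx.
have [by_ | //] := (Lspec_bd_or_int N y).1 sy.
have nbz : ~ Lspec_bd N z.
  by move=> bz; case: xy; rewrite (Lspec_below_bd_pair bx bz xz sy yz).
left; split=> l; split.
- move=> il; have : Lspec N l by apply/Lspec_bd_or_int; right.
  by case/spec => // e; [case: nix | case: niy]; rewrite -e.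
- by move=> ->.
- move=> bl; have : Lspec N l by apply/Lspec_bd_or_int; left.
  by case/spec => e; [left | right | case: nbz; rewrite -e].
- by case=> ->.
Qed.

Lemma Lspec_eq_two_strict M N : two_strict_bd M ->
  (forall l, Lspec N l <-> Lspec M l) ->
  \tr N = \tr M /\
  ([/\ \det N = \det M, forall l, Lspec_int N l <-> Lspec_int M l
     & forall l, Lspec_bd N l <-> Lspec_bd M l]
   \/ lplus N * lminus N = \det M /\ \det N = lplus M * lminus M).
Proof.
move=> sM eN; have lpm : lplus M != lminus M by case: sM.
have [lp_mu lm_mu eint ebd] := two_strict_bd_spec sM.
have mu_root := Lspec_int_root ((eint _).2 erefl).
have spec3 l : Lspec N l <-> [\/ l = lplus M, l = lminus M | l = perron_root M].
  rewrite eN Lspec_bd_or_int eint ebd.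
  by split=> [[[] | ] | []] ->;
    [exact: Or31 | exact: Or32 | exact: Or33 | left; left | left; right | right].
have [[iN bN] | [ixN iyN bzN]] := Lspec3_cases lpm lp_mu lm_mu spec3.
  have trN : \tr N = \tr M.
    rewrite -(Lspec_bd_pair_tr lpm ((bN _).2 (or_introl erefl))) ?mxtrace_coords //.
    exact: (bN _).2 (or_intror erefl).
  split=> //; left; split=> [| l | l]; [ | by rewrite iN eint | by rewrite bN ebd].
  by have := Lspec_int_root ((iN _).2 erefl); rewrite trN; lra.
have [trN detN] := quad_roots lpm (Lspec_int_root ixN) (Lspec_int_root iyN).
split; first by rewrite -trN mxtrace_coords.
right; split => //; rewrite !mxtrace_coords in trN mu_root.
case/Lspec_bdP: bzN => [[e _] | [e _]].
  have -> : lminus N = lplus M + lminus M - lplus N by lra.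
  by rewrite -e; lra.
have -> : lplus N = lplus M + lminus M - lminus N by lra.
by rewrite -e; lra.
Qed.

Definition Eplus : 'M[R]_2 := const_mx (1 / 2).

Lemma Eplus_coords :
  [/\ lplus Eplus = 1, lminus Eplus = 0, kplus Eplus = 0 & kminus Eplus = 0].
Proof. by rewrite /lplus /lminus /kplus /kminus !mxE; split; field. Qed.

Lemma inW_Eplus sym : inW sym Eplus.
Proof. by case: sym => //=; rewrite trmx_const. Qed.

Lemma inW_pencil sym t Y B : inW sym Y -> inW sym B -> inW sym (t *: Y + B).
Proof. by case: sym => //= eY eB; rewrite linearD linearZ /= eY eB. Qed.

Lemma two_strict_bd_pencil M t : two_strict_bd M -> t != lminus M - lplus M ->
  two_strict_bd (t *: Eplus + M).
Proof.
case=> kp km _ /eqP t0; rewrite /two_strict_bd.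
have [-> -> -> ->] := pencil_coords t Eplus M.
have [-> -> -> ->] := Eplus_coords; rewrite !mulr0 !add0r mulr1.
by split=> //; apply/eqP => e; apply: t0; lra.
Qed.

Definition lin_poly (f : 'M[R]_2 -> R) B Y : {poly R} := (f B)%:P + f Y *: 'X.
Definition tr_poly B Y := lin_poly lplus B Y + lin_poly lminus B Y.
Definition diag_poly B Y := lin_poly lplus B Y * lin_poly lminus B Y.
Definition det_poly B Y := diag_poly B Y - lin_poly kplus B Y * lin_poly kminus B Y.

Lemma tr_polyE B Y t : (tr_poly B Y).[t] = \tr (t *: Y + B).
Proof.
rewrite mxtrace_coords; have [-> -> _ _] := pencil_coords t Y B.
by rewrite /tr_poly /lin_poly !(hornerD, hornerC, hornerZ, hornerX); ring.
Qed.

Lemma diag_polyE B Y t : (diag_poly B Y).[t] = lplus (t *: Y + B) * lminus (t *: Y + B).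
Proof.
have [-> -> _ _] := pencil_coords t Y B.
by rewrite /diag_poly /lin_poly !(hornerD, hornerN, hornerM, hornerC, hornerZ, hornerX); ring.
Qed.

Lemma det_polyE B Y t : (det_poly B Y).[t] = \det (t *: Y + B).
Proof.
rewrite det_coords; have [-> -> -> ->] := pencil_coords t Y B.
by rewrite /det_poly /diag_poly /lin_poly !(hornerD, hornerN, hornerM, hornerC, hornerZ, hornerX); ring.
Qed.

Lemma diag_pencil_not_eigen M B Y : 0 < kplus M * kminus M ->
  (forall t, \tr (t *: Y + B) = \tr (t *: Eplus + M)) ->
  (forall t, lplus (t *: Y + B) * lminus (t *: Y + B) = \det (t *: Eplus + M)) -> False.
Proof.
move=> kk etr edet.
suff [] : lplus Y - 1 = 0 /\ lplus Y = 0 by lra.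
apply: (@affine_mul_const _ (lplus B - lplus M) _ (lplus B - lminus M) _ (kplus M * kminus M)).
  by rewrite gt_eqF.
move=> t; have := etr t; have := edet t; rewrite !mxtrace_coords det_coords.
have [-> -> _ _] := pencil_coords t Y B; have [-> -> -> ->] := pencil_coords t Eplus M.
have [-> -> -> ->] := Eplus_coords => edet_t etr_t.
have eq_lm : t * lminus Y + lminus B = t + lplus M + lminus M - (t * lplus Y + lplus B).
  by lra.
by rewrite eq_lm in edet_t; lra.
Qed.

Section Preserver.
Variables (sym : bool) (phi : 'M[R]_2 -> 'M[R]_2).
Hypothesis phi_lin : forall (k : R) (A B : 'M[R]_2), inW sym A -> inW sym B ->
  phi (k *: A + B) = k *: phi A + phi B.
Hypothesis phi_pres : forall A, inW sym A -> forall lam, Lspec (phi A) lam <-> Lspec A lam.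

Lemma det_phi_two_strict M : inW sym M -> two_strict_bd M -> \det (phi M) = \det M.
Proof.
move=> WM sM; set t0 := lminus M - lplus M; have WE := inW_Eplus sym.
have cmp t : t != t0 ->
    \tr (t *: phi Eplus + phi M) = \tr (t *: Eplus + M) /\
    (\det (t *: phi Eplus + phi M) = \det (t *: Eplus + M) \/
     lplus (t *: phi Eplus + phi M) * lminus (t *: phi Eplus + phi M) = \det (t *: Eplus + M)).
  move=> ht; rewrite -phi_lin //.
  have := Lspec_eq_two_strict (two_strict_bd_pencil sM ht) (phi_pres (inW_pencil t WE WM)).
  by case=> ? [[? _ _] | [? _]]; split => //; [left | right].
have tr_eq : tr_poly (phi M) (phi Eplus) = tr_poly M Eplus.
  by apply: (@poly_eq_except _ _ _ t0) => t ht; rewrite !tr_polyE; case: (cmp t ht).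
have det_or_diag : det_poly (phi M) (phi Eplus) = det_poly M Eplus \/
                    diag_poly (phi M) (phi Eplus) = det_poly M Eplus.
  apply: (@poly_eq_or_except _ _ _ _ _ t0) => t ht.
  by rewrite !det_polyE diag_polyE; case: (cmp t ht).
case: det_or_diag => [edet | ediag].
  by have := det_polyE (phi M) (phi Eplus) 0; rewrite edet det_polyE !scale0r !add0r.
exfalso; apply: (@diag_pencil_not_eigen M (phi M) (phi Eplus)) => [| t | t].
- by case: sM => kp km _; apply: mulr_gt0.
- by rewrite -!tr_polyE tr_eq.
- by rewrite -diag_polyE ediag det_polyE.
Qed.

End Preserver.

End LorentzCoordinates.

Unset Implicit Arguments.
Set Strict Implicit.

Theorem lemma4p1 (R : realType) (sym : bool) (phi : 'M[R]_2 -> 'M[R]_2)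
  (phiW : forall A, inW sym A -> inW sym (phi A))
  (phi_lin : forall (k : R) (A B : 'M[R]_2), inW sym A -> inW sym B ->
     phi (k *: A + B) = k *: phi A + phi B)
  (phi_pres : forall A, inW sym A -> forall lam, Lspec (phi A) lam <-> Lspec A lam)
  (A : 'M[R]_2) (HA : inW sym A)
  (l1 l2 : R) (Hl12 : l1 != l2) (H1 : strict_bd A l1) (H2 : strict_bd A l2) :
  [/\ (forall lam, Lspec_int A lam <-> Lspec_int (phi A) lam),
      (exists lam, Lspec_int A lam)
    & (forall lam, Lspec_bd A lam <-> Lspec_bd (phi A) lam)].
Proof.
have sA := two_strict_bd_of_pair Hl12 H1 H2.
have [_ _ intA _] := two_strict_bd_spec sA.
have [_ [[_ eint ebd] | [_ edet]]] := Lspec_eq_two_strict sA (phi_pres A HA).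
  split=> [lam | | lam]; first by rewrite eint.
    by exists (perron_root A); apply/intA.
  by rewrite ebd.
have := det_phi_two_strict phi_lin phi_pres HA sA.
rewrite edet det_coords; case: sA => kp km _.
by have := mulr_gt0 kp km; lra.
Qed.
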